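(* Let $L$ be a finite-dimensional Lie algebra over an arbitrary field $F$. Let $U$ be a core-free subalgebra of $L$ such that $\langle u,z\rangle$ is either two-dimensional or a $\mu$-algebra for every $0\ne u\in U$ and $z\in L\setminus U$. Then one of the following holds: (i) $L$ is almost abelian; (ii) $\langle u,z\rangle$ is a $\mu$-algebra for every $0\ne u\in U$ and $z\in L\setminus U$; (iii) $F$ has characteristic two and there is an isomorphism $L\cong K$ carrying $U$ onto $Fc$.
   Context: $K$ denotes the three-dimensional Lie algebra with basis $a,b,c$ and products $[a,b]=c$, $[b,c]=b$, $[a,c]=a$. $\langle u,z\rangle$ denotes the subalgebra generated by $u,z$. The core of $U$ is the largest ideal of $L$ contained in $U$; $U$ is core-free if its core is $0$. A $\mu$-algebra is a non-solvable Lie algebra in which every proper subalgebra is one-dimensional. $L$ is almost abelian if $L=L^2\oplus Fx$ for some $x$, where $L^2=[L,L]$ is abelian and $\mathrm{ad}\,x$ acts as the identity map on $L^2$. *)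

From HB Require Import structures.
From mathcomp Require Import all_boot all_order all_algebra.
Set Implicit Arguments. Unset Strict Implicit. Unset Printing Implicit Defensive.
Import Order.TTheory GRing.Theory Num.Theory.
Local Open Scope ring_scope.

Section Lie.
Variables (F : fieldType) (V : vectType F) (br : V -> V -> V).

Definition is_lie : Prop :=
  [/\ (forall a x y z, br (a *: x + y) z = a *: br x z + br y z),
      (forall a x y z, br z (a *: x + y) = a *: br z x + br z y),
      (forall x, br x x = 0) &
      (forall x y z, br x (br y z) + br y (br z x) + br z (br x y) = 0)].

Definition brk (A B : {vspace V}) : {vspace V} :=
  (<< [seq br x y | x <- vbasis A, y <- vbasis B] >>)%VS.

Definition subalg (S : {vspace V}) : Prop :=
  forall x y, x \in S -> y \in S -> br x y \in S.

Definition ideal (I : {vspace V}) : Prop :=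
  forall x y, y \in I -> br x y \in I.

Definition core_free (U : {vspace V}) : Prop :=
  forall I, ideal I -> (I <= U)%VS -> I = 0%VS.

(* subalgebra generated by u and z: close <[u]> + <[z]> under brackets;
   the increasing chain stabilises after at most dim L steps *)
Definition gen_step (S : {vspace V}) : {vspace V} := (S + brk S S)%VS.
Definition gen (u z : V) : {vspace V} :=
  iter (\dim (fullv : {vspace V})) gen_step (<[u]> + <[z]>)%VS.

Definition derived (S : {vspace V}) (n : nat) : {vspace V} :=
  iter n (fun T => brk T T) S.
Definition solvable (S : {vspace V}) : Prop := exists n, derived S n = 0%VS.

Definition mu_alg (S : {vspace V}) : Prop :=
  ~ solvable S /\
  forall T : {vspace V}, subalg T -> (T <= S)%VS -> T != S -> T != 0%VS ->
    \dim T = 1%N.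

Definition almost_abelian : Prop :=
  let L2 := brk fullv fullv in
  exists x : V,
    [/\ (L2 :&: <[x]> = 0)%VS, (L2 + <[x]> = fullv)%VS,
        (forall y w, y \in L2 -> w \in L2 -> br y w = 0) &
        (forall y, y \in L2 -> br x y = y)].
End Lie.

(* The Lie algebra K on F^3 with basis a, b, c:
   [a,b] = c, [b,c] = b, [a,c] = a *)
Section K.
Variable F : fieldType.
Definition Ka : 'rV[F]_3 := \row_(j < 3) ((j : nat) == 0%N)%:R.
Definition Kb : 'rV[F]_3 := \row_(j < 3) ((j : nat) == 1%N)%:R.
Definition Kc : 'rV[F]_3 := \row_(j < 3) ((j : nat) == 2%N)%:R.
Definition i0 : 'I_3 := @Ordinal 3 0 isT.
Definition i1 : 'I_3 := @Ordinal 3 1 isT.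
Definition i2 : 'I_3 := @Ordinal 3 2 isT.
Definition Kbr (x y : 'rV[F]_3) : 'rV[F]_3 :=
  (x ord0 i0 * y ord0 i2 - x ord0 i2 * y ord0 i0) *: Ka
  + (x ord0 i1 * y ord0 i2 - x ord0 i2 * y ord0 i1) *: Kb
  + (x ord0 i0 * y ord0 i1 - x ord0 i1 * y ord0 i0) *: Kc.
End K.

(* Say z is an eigenvector of ad u modulo F u if [u, z] - a z lies in F u.  If
   some <u0, z0> is not a mu-algebra it is two-dimensional, so z0 is such an
   eigenvector; this rules out every mu-algebra <u0, z> (eigen_excludes_mu),
   so all z outside U are eigenvectors and ad u0 acts modulo F u0 as a scalar
   l0 (scalar_mod), nonzero because U is core-free.  Then no <u, z> is a
   mu-algebra (scalar_excludes_mu), so every nonzero u in U acts likewise.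
   Rescaling u0 to make l0 = 1, L = N + F u0 with N the fixed space of ad u0
   and U = F u0; if N is abelian L is almost abelian, otherwise a bracket in N
   is a nonzero multiple of u0, forcing char 2 and a basis with the structure
   constants of K. *)
From HB Require Import structures.
From mathcomp Require Import all_boot all_order all_algebra ring.
From Stdlib Require Import Classical.
Import GRing.Theory.
Local Open Scope ring_scope.
Set Implicit Arguments. Unset Strict Implicit. Unset Printing Implicit Defensive.

Section LinearAlgebra.
Variables (F : fieldType) (V : vectType F).
Implicit Types (g : 'End(V)) (P Q M S : {vspace V}) (x y z : V) (a b : F).

Definition shift g a : 'End(V) := (g - a *: \1)%VF.

Lemma shiftE g a z : shift g a z = g z - a *: z.
Proof. by rewrite add_lfunE opp_lfunE scale_lfunE id_lfunE. Qed.

Lemma shift_sub g a b z : shift g a z - shift g b z = (b - a) *: z.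
Proof. by rewrite !shiftE scalerBl opprB addrC addrA subrK. Qed.

Lemma dim_span2 x y : x != 0 -> y \notin <[x]>%VS -> \dim (<[x]> + <[y]>) = 2%N.
Proof.
move=> x0 yx; have y0 : y != 0 by apply: contraNneq yx => ->; apply: mem0v.
rewrite dimv_disjoint_sum ?dim_vline ?x0 ?y0 //.
apply/eqP; rewrite -subv0; apply/subvP => w /memv_capP [wx /vlineP [k ek]].
by move: wx; rewrite ek memv0 rpredZeq (negbTE yx) orbF scaler_eq0 => ->.
Qed.

Lemma dim_meet_ker g M x :
  (g @: M <= <[x]>)%VS -> (\dim M <= (\dim (M :&: lker g)).+1)%N.
Proof.
move=> gMx; rewrite -(limg_ker_dim g M) -addn1 leq_add2l.
by apply: leq_trans (dimvS gMx) _; rewrite dim_vline leq_b1.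
Qed.

Lemma linear_agree (W : lmodType F) (phi psi : V -> W) (X : seq V) :
  linear phi -> linear psi -> {in X, phi =1 psi} -> {in <<X>>%VS, phi =1 psi}.
Proof.
move=> lphi lpsi eX x /(coord_span (X := in_tuple X)) ->.
have sumE (chi : V -> W) (c : 'I_(size X) -> F) :
    linear chi -> chi (\sum_i c i *: X`_i) = \sum_i c i *: chi X`_i.
  move=> lchi; have chi0 : chi 0 = 0.
    by have := lchi (-1) 0 0; rewrite scaler0 add0r scaleN1r addNr.
  by elim/big_rec2: _ => // i y1 y2 _ <-; rewrite lchi.
by rewrite !sumE //; apply: eq_bigr => i _; rewrite eX // mem_nth.
Qed.

Definition coord_row n (X : n.-tuple V) x : 'rV[F]_n := \row_j coord X j x.

Fact coord_row_linear n (X : n.-tuple V) : linear (coord_row X).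
Proof. by move=> a x y; apply/rowP => j; rewrite !mxE linearP. Qed.
HB.instance Definition _ n (X : n.-tuple V) :=
  GRing.isSemilinear.Build F V 'rV[F]_n _ (coord_row X)
    (GRing.semilinear_linear (coord_row_linear X)).

Lemma coord_row_iso n (X : n.-tuple V) : basis_of fullv X ->
  [/\ lker (linfun (coord_row X)) = 0%VS, limg (linfun (coord_row X)) = fullv &
      forall i : 'I_n, linfun (coord_row X) X`_i = \row_j (i == j)%:R].
Proof.
move=> bX; set f := linfun (coord_row X).
have fX (i : 'I_n) : f X`_i = \row_j (i == j)%:R.
  by apply/rowP => j; rewrite lfunE /coord_row !mxE coord_free ?(basis_free bX).
have ker0 : lker f = 0%VS.
  apply/eqP; rewrite -subv0; apply/subvP => x; rewrite memv_ker memv0 => /eqP fx0.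
  have xX : x \in <<X>>%VS by rewrite (span_basis bX) memvf.
  rewrite (coord_span xX) big1 // => j _.
  have := congr1 (fun r : 'rV_n => r 0 j) fx0.
  by rewrite lfunE /coord_row !mxE => ->; rewrite scale0r.
split => //; apply/eqP; rewrite eqEdim subvf /=.
have := limg_ker_dim f fullv; rewrite ker0 capv0 dimv0 add0n (size_basis bX) => ->.
by rewrite dimvf dim_matrix mul1r.
Qed.

Section ExtensiveIteration.
Variable f : {vspace V} -> {vspace V}.
Hypothesis f_ext : forall S, (S <= f S)%VS.

Lemma subv_iter k S : (S <= iter k f S)%VS.
Proof. by elim: k => //= k IH; apply: subv_trans IH (f_ext _). Qed.

(* an extensive operator on subspaces of V stabilises after \dim V steps,
   because each strict step raises the dimension *)
Lemma iter_extensive_fix S :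
  f (iter (\dim {:V}) f S) = iter (\dim {:V}) f S.
Proof.
suff [dimI|//] : (\dim {:V} <= \dim (iter (\dim {:V}) f S))%N \/
                 f (iter (\dim {:V}) f S) = iter (\dim {:V}) f S.
  have -> : iter (\dim {:V}) f S = fullv by apply/eqP; rewrite eqEdim subvf.
  by apply/eqP; rewrite eqEsubv subvf f_ext.
elim: (\dim {:V}) => [|k [dimk|fixk]] /=; first by left.
- have [fixk|nfixk] := eqVneq (f (iter k f S)) (iter k f S); first by right; rewrite fixk.
  left; apply: leq_ltn_trans dimk _.
  by rewrite (ltn_leqif (dimv_leqif_eq (f_ext _))) eq_sym.
- by right; rewrite fixk.
Qed.

End ExtensiveIteration.

Section ScalarModulo.
Variables (g : 'End(V)) (P Q : {vspace V}).
Hypotheses (gP : (g @: P <= P)%VS) (QP : (Q <= P)%VS).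

Lemma eigen_mod_unique a1 a2 z1 z2 :
  z1 \notin P -> z1 \in (<[z2]> + P)%VS ->
  shift g a1 z1 \in Q -> shift g a2 z2 \in Q -> a1 = a2.
Proof.
move=> z1P /memv_addP [p /vlineP [c ->] [q qP ez1]] e1 e2.
have e2' : shift g a2 z1 \in P.
  rewrite ez1 linearP /= memvD ?memvZ ?(subvP QP _ e2) // shiftE memvB ?memvZ //.
  exact: (subvP gP) _ (memv_img g qP).
move: (memvB e2' (subvP QP _ e1)); rewrite shift_sub rpredZeq (negbTE z1P) orbF.
by rewrite subr_eq0 => /eqP.
Qed.

Hypothesis eigen_outside : forall z, z \notin P -> exists a, shift g a z \in Q.

(* all eigenvectors modulo Q outside P share their eigenvalue; when z1 is not
   in F z2 + P, compare both with z1 + z2 *)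
Lemma eigen_mod_same a1 a2 z1 z2 :
  z1 \notin P -> z2 \notin P -> shift g a1 z1 \in Q -> shift g a2 z2 \in Q -> a1 = a2.
Proof.
move=> z1P z2P e1 e2.
have [z12|z12] := boolP (z1 \in <[z2]> + P)%VS; first exact: eigen_mod_unique e1 e2.
have wP : z1 + z2 \notin P.
  apply: contra z12 => h; rewrite -(addrK z2 z1) addrC.
  by rewrite memv_add ?memvN ?memv_line.
have [a3 e3] := eigen_outside wP.
have combo : (a1 - a3) *: z1 + (a2 - a3) *: z2 \in Q.
  by rewrite -!(shift_sub g) addrACA -opprD -linearD memvB ?memvD.
have e13 : a1 = a3.
  apply/eqP; rewrite -subr_eq0; apply: contraR z12 => ne.
  rewrite -(scalerK ne z1) memvZ // -(addrK ((a2 - a3) *: z2) ((a1 - a3) *: z1)) addrC.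
  by rewrite memv_add ?memvN ?memvZ ?memv_line ?(subvP QP).
move: combo; rewrite e13 subrr scale0r add0r => /(subvP QP).
by rewrite rpredZeq (negbTE z2P) orbF subr_eq0 => /eqP.
Qed.

Lemma scalar_mod z0 : z0 \notin P -> exists l, forall z, shift g l z \in Q.
Proof.
move=> z0P; have [l e0] := eigen_outside z0P; exists l.
have outside z : z \notin P -> shift g l z \in Q.
  by move=> zP; have [a e] := eigen_outside zP; rewrite -(eigen_mod_same zP z0P e e0).
move=> z; have [zP|/outside //] := boolP (z \in P).
have zz0 : z + z0 \notin P by apply: contra z0P => h; rewrite -(addKr z z0) memvD ?memvN.
by rewrite -(addrK z0 z) linearB memvB ?outside.
Qed.

End ScalarModulo.
End LinearAlgebra.

Section KAlgebra.
Variable F : fieldType.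
Implicit Types x y z : 'rV[F]_3.

Lemma Kbr_linear_l z : linear (fun x => Kbr x z).
Proof. by move=> a x y; apply/rowP => j; rewrite /Kbr !mxE; ring. Qed.

Lemma Kbr_linear_r z : linear (Kbr z).
Proof. by move=> a x y; apply/rowP => j; rewrite /Kbr !mxE; ring. Qed.

Lemma Kbr_anti x y : Kbr x y = - Kbr y x.
Proof. by apply/rowP => j; rewrite /Kbr !mxE; ring. Qed.

Lemma Kbr_xx x : Kbr x x = 0.
Proof. by apply/rowP => j; rewrite /Kbr !mxE; ring. Qed.

Lemma KbrAB : Kbr (Ka F) (Kb F) = Kc F.
Proof. by apply/rowP => j; rewrite /Kbr !mxE /=; ring. Qed.
Lemma KbrBC : Kbr (Kb F) (Kc F) = Kb F.
Proof. by apply/rowP => j; rewrite /Kbr !mxE /=; ring. Qed.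
Lemma KbrAC : Kbr (Ka F) (Kc F) = Ka F.
Proof. by apply/rowP => j; rewrite /Kbr !mxE /=; ring. Qed.

End KAlgebra.

Section Lie.
Variables (F : fieldType) (V : vectType F) (br : V -> V -> V).
Hypothesis hL : is_lie br.
Implicit Types (x y z u n m : V) (a b : F) (S T M : {vspace V}).

Definition ad x : V -> V := br x.
Definition adr y : V -> V := br^~ y.

Fact ad_is_linear x : linear (ad x). Proof. by move=> a y z; case: hL. Qed.
Fact adr_is_linear y : linear (adr y).
Proof. by move=> a x z; rewrite /adr; case: hL. Qed.
HB.instance Definition _ x := GRing.isSemilinear.Build F V V _ (ad x)
  (GRing.semilinear_linear (ad_is_linear x)).
HB.instance Definition _ y := GRing.isSemilinear.Build F V V _ (adr y)
  (GRing.semilinear_linear (adr_is_linear y)).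

Lemma br0l y : br 0 y = 0. Proof. exact: (linear0 (adr y)). Qed.
Lemma brDl x1 x2 y : br (x1 + x2) y = br x1 y + br x2 y.
Proof. exact: (linearD (adr y)). Qed.
Lemma brBl x1 x2 y : br (x1 - x2) y = br x1 y - br x2 y.
Proof. exact: (linearB (adr y)). Qed.
Lemma brZl a x y : br (a *: x) y = a *: br x y. Proof. exact: (linearZ_LR (adr y)). Qed.
Lemma brDr x y1 y2 : br x (y1 + y2) = br x y1 + br x y2.
Proof. exact: (linearD (ad x)). Qed.
Lemma brNr x y : br x (- y) = - br x y. Proof. exact: (linearN (ad x)). Qed.
Lemma brBr x y1 y2 : br x (y1 - y2) = br x y1 - br x y2.
Proof. exact: (linearB (ad x)). Qed.
Lemma brZr a x y : br x (a *: y) = a *: br x y. Proof. exact: (linearZ_LR (ad x)). Qed.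

Lemma brxx x : br x x = 0. Proof. by case: hL. Qed.
Lemma jacobi x y z : br x (br y z) + br y (br z x) + br z (br x y) = 0.
Proof. by case: hL. Qed.

(* anticommutativity, from the alternating law applied to x + y *)
Lemma brC x y : br x y = - br y x.
Proof.
apply/eqP; rewrite -addr_eq0; have := brxx (x + y).
by rewrite brDl !brDr !brxx add0r addr0 => ->.
Qed.

(* Jacobi: the bracket of two ad u-eigenvectors is an eigenvector for the
   sum of the eigenvalues *)
Lemma br_weight u n m a b :
  br u n = a *: n -> br u m = b *: m -> br u (br n m) = (a + b) *: br n m.
Proof.
move=> un um; have := jacobi u n m.
rewrite (brC m u) um brNr brZr un brZr (brC m n).
rewrite scalerN -addrA -opprD => /eqP; rewrite subr_eq0 => /eqP ->.
by rewrite scalerDl addrC.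
Qed.

Lemma mem_brk S T x y : x \in S -> y \in T -> br x y \in brk br S T.
Proof.
move=> xS yT; suff Tpre : (T <= linfun (ad x) @^-1: brk br S T)%VS.
  by move: (subvP Tpre _ yT); rewrite -memv_preim lfunE.
rewrite -{1}(span_basis (vbasisP T)); apply/span_subvP => y0 y0T.
suff Spre : (S <= linfun (adr y0) @^-1: brk br S T)%VS.
  by move: (subvP Spre _ xS); rewrite -!memv_preim !lfunE.
rewrite -{1}(span_basis (vbasisP S)); apply/span_subvP => x0 x0S.
by rewrite -memv_preim lfunE memv_span //; apply/allpairsP; exists (x0, y0).
Qed.

Lemma brk_sub S T M :
  (forall x y, x \in S -> y \in T -> br x y \in M) -> (brk br S T <= M)%VS.
Proof.
move=> STM; apply/span_subvP => w /allpairsP [[x y] [/= xS yT ->]].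
by apply: STM; apply: vbasis_mem.
Qed.

Definition adL x : 'End(V) := linfun (ad x).

Lemma shift_adE u a z : shift (adL u) a z = br u z - a *: z.
Proof. by rewrite shiftE lfunE. Qed.

Definition eigen_mod u a z := br u z - a *: z \in <[u]>%VS.

Lemma eigen_modZ u a z k :
  k != 0 -> eigen_mod u a z -> eigen_mod (k *: u) (k * a) z.
Proof.
move=> k0; rewrite /eigen_mod brZl -scalerA -scalerBr => /vlineP [c ->].
by rewrite scalerA -[_ * c]mulrC -scalerA memvZ ?memv_line.
Qed.

Lemma subalg_cap S T : subalg br S -> subalg br T -> subalg br (S :&: T).
Proof.
move=> sS sT x y /memv_capP [xS xT] /memv_capP [yS yT].
by rewrite memv_cap sS ?sT.
Qed.

Lemma eigen_mod_mem S u a z : subalg br S -> u \in S -> z \in S ->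
  br u z - a *: z \in S.
Proof. by move=> sS uS zS; rewrite memvB ?memvZ ?sS. Qed.

(* gen u z is a subalgebra, the iteration defining it having stabilised *)
Lemma gen_fix u z : gen_step br (gen br u z) = gen br u z.
Proof. exact: iter_extensive_fix (fun S => addvSl S _) _. Qed.

Lemma gen_subalg u z : subalg br (gen br u z).
Proof.
move=> x y xG yG; apply: subvP (mem_brk xG yG).
by apply/addv_idPl; exact: gen_fix.
Qed.

Lemma gen_base u z : (<[u]> + <[z]> <= gen br u z)%VS.
Proof. exact: subv_iter (fun S => addvSl S _) _ _. Qed.

Lemma gen_u u z : u \in gen br u z.
Proof. exact: subvP (gen_base u z) _ (subvP (addvSl _ _) _ (memv_line u)). Qed.

Lemma gen_z u z : z \in gen br u z.
Proof. exact: subvP (gen_base u z) _ (subvP (addvSr _ _) _ (memv_line z)). Qed.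

Lemma br_span2 x y p q : p \in (<[x]> + <[y]>)%VS -> q \in (<[x]> + <[y]>)%VS ->
  br p q \in <[br x y]>%VS.
Proof.
move=> /memv_addP [a1 /vlineP [k1 ->] [a2 /vlineP [k2 ->] ->]].
move=> /memv_addP [b1 /vlineP [l1 ->] [b2 /vlineP [l2 ->] ->]].
rewrite !(brDl, brDr, brZl, brZr) !brxx !scaler0 add0r addr0 (brC y x) !scalerN.
by rewrite memvD ?memvN ?memvZ ?memv_line.
Qed.

Lemma span2_subalg x y : br x y \in (<[x]> + <[y]>)%VS -> subalg br (<[x]> + <[y]>).
Proof. by rewrite memvE => sub p q pS qS; apply: subvP sub _ (br_span2 pS qS). Qed.

Lemma brk_abelian S :
  (forall p q, p \in S -> q \in S -> br p q = 0) -> brk br S S = 0%VS.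
Proof.
move=> abS; apply/eqP; rewrite -subv0.
by apply: brk_sub => p q pS qS; rewrite abS ?mem0v.
Qed.

(* an algebra of dimension at most 2 has a one-dimensional derived algebra *)

Lemma dim2_solvable S : (\dim S <= 2)%N -> solvable br S.
Proof.
move=> dimS; set x := (vbasis S)`_0; set y := (vbasis S)`_1.
have Sxy : (S <= <[x]> + <[y]>)%VS.
  rewrite -{1}(span_basis (vbasisP S)); apply/span_subvP => v /(nthP 0) [i].
  rewrite size_tuple => ltiS <-; case: i ltiS => [|[|i]] ltiS.
  - exact: subvP (addvSl _ _) _ (memv_line _).
  - exact: subvP (addvSr _ _) _ (memv_line _).
  - by have := leq_trans ltiS dimS.
have SSline : (brk br S S <= <[br x y]>)%VS.
  by apply: brk_sub => a b aS bS; apply: br_span2; apply: (subvP Sxy).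
exists 2%N; apply: brk_abelian => p q /(subvP SSline) /vlineP [k ->].
by move=> /(subvP SSline) /vlineP [l ->]; rewrite brZl brZr brxx !scaler0.
Qed.

Lemma mu_dim3 M : mu_alg br M -> (3 <= \dim M)%N.
Proof.
by move=> [nsolv _]; rewrite ltnNge; apply: contra_notN nsolv; apply: dim2_solvable.
Qed.

Lemma mu_sub_eq M T :
  mu_alg br M -> subalg br T -> (T <= M)%VS -> (2 <= \dim T)%N -> T = M.
Proof.
move=> [_ small] sT TM dimT; apply/eqP/negPn/negP => neTM.
have T0 : T != 0%VS by apply/eqP => T0; move: dimT; rewrite T0 dimv0.
by move: dimT; rewrite (small T sT TM neTM T0).
Qed.

(* in a mu-algebra no element outside F u is an eigenvector of ad u modulo F u,
   since u and such an element would span a two-dimensional subalgebra *)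
Lemma mu_no_eigen M u a m : mu_alg br M -> u \in M -> u != 0 ->
  m \in M -> m \notin <[u]>%VS -> ~ eigen_mod u a m.
Proof.
move=> muM uM u0 mM mu /vlineP [k ek].
have um : br u m \in (<[u]> + <[m]>)%VS.
  by rewrite -(subrK (a *: m) (br u m)) ek memv_add ?memvZ ?memv_line.
have e : (<[u]> + <[m]>)%VS = M.
  apply: mu_sub_eq muM (span2_subalg um) _ _; last by rewrite dim_span2.
  by rewrite subv_add -!memvE uM.
by have := mu_dim3 muM; rewrite -e dim_span2.
Qed.

Section CoreFreeSubalgebra.
Variable U : {vspace V}.
Hypothesis hU : subalg br U.

Lemma line_notin u z : u \in U -> z \notin U -> z \notin <[u]>%VS.
Proof. by move=> uU; apply: contra => /vlineP [k ->]; rewrite memvZ. Qed.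

(* a two-dimensional gen u z is F u + F z, so z is an eigenvector modulo F u *)
Lemma dim2_eigen u z : u != 0 -> z \notin <[u]>%VS -> \dim (gen br u z) = 2%N ->
  exists a, eigen_mod u a z.
Proof.
move=> u0 zu dimG.
have eG : gen br u z = (<[u]> + <[z]>)%VS.
  by apply/eqP; rewrite eq_sym eqEdim gen_base dimG dim_span2.
have := gen_subalg (gen_u u z) (gen_z u z).
rewrite eG => /memv_addP [p /vlineP [b ->] [q /vlineP [a ->] euz]].
by exists a; rewrite /eigen_mod euz addrK memvZ ?memv_line.
Qed.

Lemma mu_meet u z : u \in U -> u != 0 -> z \notin U -> mu_alg br (gen br u z) ->
  (gen br u z :&: U)%VS = <[u]>%VS.
Proof.
move=> uU u0 zU muM; set T := (gen br u z :&: U)%VS.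
have uT : u \in T by rewrite memv_cap gen_u uU.
have TM : T != gen br u z.
  by apply: contraNneq zU => eT; have := gen_z u z; rewrite -eT => /memv_capP [].
have T0 : T != 0%VS by apply: contraNneq u0 => T0; rewrite -memv0 -T0.
have dimT := muM.2 T (subalg_cap (@gen_subalg u z) hU) (capvSl _ _) TM T0.
by apply/eqP; rewrite eq_sym eqEdim -memvE uT dimT dim_vline u0.
Qed.

(* if ad u1 acts modulo F u1 as a nonzero scalar l, then no gen u2 z is a
   mu-algebra: its elements on which ad u1 is exactly l form an abelian
   subalgebra of codimension at most one, which must be all of it *)
Lemma scalar_excludes_mu u1 l u2 z : u1 \in U -> u1 != 0 -> l != 0 ->
  (forall x, eigen_mod u1 l x) -> u2 \in U -> u2 != 0 -> z \notin U ->
  ~ mu_alg br (gen br u2 z).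
Proof.
move=> u1U u10 l0 hl u2U u20 zU muM; set M := gen br u2 z in muM.
have u1M : u1 \notin M.
  apply/negP => u1M.
  have /vlineP [k ek] : u1 \in <[u2]>%VS.
    by rewrite -(mu_meet u2U u20 zU muM) memv_cap u1M.
  have k0 : k != 0 by apply: contraNneq u10 => k0; rewrite ek k0 scale0r.
  have := eigen_modZ (invr_neq0 k0) (hl z); rewrite ek scalerA mulVf // scale1r.
  exact: mu_no_eigen muM (gen_u _ _) u20 (gen_z _ _) (line_notin u2U zU).
set T := (M :&: lker (shift (adL u1) l))%VS.
have dimT : (2 <= \dim T)%N.
  rewrite -ltnS; apply: leq_trans (mu_dim3 muM) (dim_meet_ker (x := u1) _).
  by apply/subvP => y /memv_imgP [x _ ->]; rewrite shift_adE; apply: hl.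
have abT n m : n \in T -> m \in T -> br n m = 0.
  have eigT y : y \in T -> y \in M /\ br u1 y = l *: y.
    by move=> /memv_capP [yM]; rewrite memv_ker shift_adE subr_eq0 => /eqP.
  move=> /eigT [nM un] /eigT [mM um].
  have := hl (br n m); rewrite /eigen_mod (br_weight un um) scalerDl addrK.
  move=> /vlineP [k ek]; have : k *: u1 \in M by rewrite -ek memvZ ?gen_subalg.
  rewrite rpredZeq (negbTE u1M) orbF => /eqP k0; move/eqP: ek.
  by rewrite k0 scale0r scaler_eq0 (negbTE l0) => /eqP.
have sT : subalg br T by move=> x y xT yT; rewrite abT ?mem0v.
have eTM := mu_sub_eq muM sT (capvSl _ _) dimT.
by apply: muM.1; exists 1%N; apply: brk_abelian => n m; rewrite -eTM; apply: abT.
Qed.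

Variable u : V.
Hypotheses (uU : u \in U) (u0 : u != 0).
Hypothesis dichot : forall w, w \notin U ->
  \dim (gen br u w) = 2%N \/ mu_alg br (gen br u w).

(* for z1, z2 outside U with gen u z2 a mu-algebra, some m in gen u z2 outside
   F u keeps z1 + m outside U; the m to avoid form a single coset of F u *)
Lemma mu_translate z1 z2 : z2 \notin U -> mu_alg br (gen br u z2) ->
  exists m, [/\ m \in gen br u z2, m \notin <[u]>%VS & z1 + m \notin U].
Proof.
move=> z2U muM; set M := gen br u z2 in muM *.
have [z12U|] := boolP (z1 + z2 \in U); last by exists z2; rewrite gen_z line_notin.
have /subvPn [m mM mspan] : ~~ (M <= <[u]> + <[z2]>)%VS.
  apply: contraL (mu_dim3 muM) => /dimvS.
  by rewrite dim_span2 ?line_notin // -ltnNge ltnS.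
exists m; split => //; first by apply: contra mspan; apply: (subvP (addvSl _ _)).
apply: contra mspan => z1mU.
have : m - z2 \in (M :&: U)%VS.
  rewrite memv_cap memvB ?gen_z //=.
  have -> : m - z2 = (z1 + m) - (z1 + z2) by rewrite opprD addrACA subrr add0r.
  exact: memvB.
rewrite mu_meet // => mz2.
by rewrite -(subrK z2 m); apply: memv_add mz2 (memv_line z2).
Qed.

(* an eigenvector z1 outside U (modulo F u) rules out every mu-algebra gen u z2:
   with m as above and w = z1 + m, the subalgebra gen u z2 meets gen u w in
   u and [u, m] - a m, hence lies in it; gen u w is then not two-dimensional,
   so it is a mu-algebra equal to gen u z2, which would contain z1 = w - m *)
Lemma eigen_excludes_mu a z1 z2 : z1 \notin U -> eigen_mod u a z1 -> z2 \notin U ->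
  ~ mu_alg br (gen br u z2).
Proof.
move=> z1U e1 z2U muM; have [m [mM mu wU]] := mu_translate z1 z2U muM.
set M := gen br u z2 in muM mM *; set w := z1 + m in wU; set G := gen br u w.
have z1M : z1 \notin M.
  apply/negP => z1M.
  exact: mu_no_eigen muM (gen_u _ _) u0 z1M (line_notin uU z1U) e1.
have vM : br u m - a *: m \in M.
  exact: eigen_mod_mem (@gen_subalg u z2) (gen_u u z2) mM.
have vG : br u m - a *: m \in G.
  have -> : br u m - a *: m = (br u w - a *: w) - (br u z1 - a *: z1).
    by rewrite -!shift_adE -linearB /w (addrC z1) addrK.
  have uG : (<[u]> <= G)%VS by rewrite -memvE gen_u.
  apply: memvB; last exact: subvP uG _ e1.
  exact: eigen_mod_mem (@gen_subalg u w) (gen_u u w) (gen_z u w).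
have vu : br u m - a *: m \notin <[u]>%VS.
  by apply/negP => eu; apply: mu_no_eigen muM (gen_u _ _) u0 mM mu eu.
have MG : (M <= G)%VS.
  have sT := subalg_cap (@gen_subalg u z2) (@gen_subalg u w).
  rewrite -(mu_sub_eq muM sT (capvSl M G)) ?capvSr // -(dim_span2 u0 vu).
  by apply: dimvS; rewrite subv_add -!memvE !memv_cap gen_u vM vG gen_u.
case: (dichot wU) => [dimG|muG].
  by have := leq_trans (mu_dim3 muM) (dimvS MG); rewrite dimG.
have eMG := mu_sub_eq muG (@gen_subalg u z2) MG (ltnW (mu_dim3 muM)).
by apply/negP: z1M; rewrite -(addrK m z1) negbK memvB // /M eMG gen_z.
Qed.

Hypothesis hcf : core_free br U.

Lemma uniform_eigenvalue z0 : z0 \notin U -> ~ mu_alg br (gen br u z0) ->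
  exists2 l, l != 0 & forall z, eigen_mod u l z.
Proof.
move=> z0U nmu0.
have dim_eigen z : z \notin U -> \dim (gen br u z) = 2%N -> exists a, eigen_mod u a z.
  by move=> zU; apply: dim2_eigen u0 (line_notin uU zU).
have [a0 e0] : exists a, eigen_mod u a z0.
  by case: (dichot z0U) => [|/nmu0 //]; apply: dim_eigen.
have eig z : z \notin U -> exists a, shift (adL u) a z \in <[u]>%VS.
  move=> zU; case: (dichot zU) => [/(dim_eigen _ zU) [a ea]|muz].
    by exists a; rewrite shift_adE.
  by have := eigen_excludes_mu z0U e0 zU muz.
have adU : (adL u @: U <= U)%VS.
  by apply/subvP => y /memv_imgP [x xU ->]; rewrite lfunE hU.
have [l hl] := scalar_mod adU (uU : (<[u]> <= U)%VS) eig z0U.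
have {}hl z : eigen_mod u l z by rewrite /eigen_mod -shift_adE.
exists l => //; apply: contraNneq u0 => l0.
have ideal_u : ideal br <[u]>%VS.
  move=> x y /vlineP [k ->]; rewrite brZr brC memvZ // memvN.
  by have := hl x; rewrite /eigen_mod l0 scale0r subr0.
by rewrite -memv0 -(hcf ideal_u) ?memv_line // -memvE.
Qed.

End CoreFreeSubalgebra.

(* a basis x0, x1, x2 obeying the structure equations of K identifies L with K:
   the coordinate map respects brackets on basis pairs, hence everywhere *)
Lemma K_iso x0 x1 x2 : basis_of fullv [:: x0; x1; x2] ->
  br x0 x1 = x2 -> br x1 x2 = x1 -> br x0 x2 = x0 ->
  exists f : 'Hom(V, 'rV[F]_3), [/\ lker f = 0%VS, limg f = fullv,
    (forall x y, f (br x y) = Kbr (f x) (f y)) & f x2 = Kc F].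
Proof.
move=> bX e01 e12 e02; pose X := [tuple x0; x1; x2].
have [ker0 imf fX] := coord_row_iso (X := X) bX; set f := linfun _ in ker0 imf fX.
have spanX x : x \in <<X>>%VS by rewrite (span_basis bX) memvf.
have f0 : f x0 = Ka F by rewrite -[x0]/(X`_i0) fX; apply/rowP => j; rewrite !mxE eq_sym.
have f1 : f x1 = Kb F by rewrite -[x1]/(X`_i1) fX; apply/rowP => j; rewrite !mxE eq_sym.
have f2 : f x2 = Kc F by rewrite -[x2]/(X`_i2) fX; apply/rowP => j; rewrite !mxE eq_sym.
have fN v : f (- v) = - f v by rewrite linearN.
have onX x y : x \in X -> y \in X -> f (br x y) = Kbr (f x) (f y).
  rewrite !inE => /or3P [] /eqP -> /or3P [] /eqP ->;
  rewrite ?(brC x1 x0) ?(brC x2 x1) ?(brC x2 x0) ?brxx ?fN ?linear0 ?e01 ?e12 ?e02;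
  rewrite ?f0 ?f1 ?f2 ?Kbr_xx ?(Kbr_anti (Kb F) (Ka F)) ?(Kbr_anti (Kc F) (Kb F));
  by rewrite ?(Kbr_anti (Kc F) (Ka F)) ?KbrAB ?KbrBC ?KbrAC.
exists f; split => // x y.
have onXl y' : y' \in X -> f (br x y') = Kbr (f x) (f y').
  move=> yX; apply: (linear_agree (phi := fun x => f (br x y'))
                                  (psi := fun x => Kbr (f x) (f y')) _ _ _ (spanX x)).
  - by move=> a u v; rewrite /= brDl brZl linearP.
  - by move=> a u v; rewrite /= linearP; exact: Kbr_linear_l.
  - by move=> x' x'X; apply: onX.
apply: (linear_agree (phi := fun y => f (br x y))
                     (psi := fun y => Kbr (f x) (f y)) _ _ onXl (spanX y)).
- by move=> a u v; rewrite /= brDr brZr linearP.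
- by move=> a u v; rewrite /= linearP; exact: Kbr_linear_r.
Qed.

Definition ad_fix u : {vspace V} := lker (shift (adL u) 1).

Lemma mem_ad_fix u n : (n \in ad_fix u) = (br u n == n).
Proof. by rewrite memv_ker shift_adE scale1r subr_eq0. Qed.

Section UnitScalar.
Variables (U : {vspace V}) (u : V).
Hypotheses (uU : u \in U) (u0 : u != 0) (hu : forall z, eigen_mod u 1 z).
Hypothesis scalarU : forall y, y \in U -> y != 0 ->
  exists2 l, l != 0 & forall z, eigen_mod y l z.
Local Notation N := (ad_fix u).

Lemma ad_fix_decomp z : exists b, z + b *: u \in N.
Proof.
have /vlineP [b eb] := hu z; exists b.
by rewrite mem_ad_fix brDr brZr brxx scaler0 addr0 -eb scale1r addrC subrK.
Qed.

Lemma ad_fix_line : (N :&: <[u]> = 0)%VS.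
Proof.
apply/eqP; rewrite -subv0; apply/subvP => w /memv_capP [wN /vlineP [k ek]].
by move: wN; rewrite mem_ad_fix ek brZr brxx scaler0 eq_sym memv0.
Qed.

Lemma ad_fix_sum : (N + <[u]> = fullv)%VS.
Proof.
apply/eqP; rewrite eqEsubv subvf /=; apply/subvP => z _; have [b zb] := ad_fix_decomp z.
by rewrite -(addrK (b *: u) z) memv_add ?memvN ?memvZ ?memv_line.
Qed.

(* U = F u: a nonzero y in U fixed by ad u would force u into F y *)
Lemma U_line : U = <[u]>%VS.
Proof.
have capU y : y \in N -> y \in U -> y = 0.
  move=> yN yU; apply/eqP/negPn/negP => y0; have [l l0 hl] := scalarU yU y0.
  have uy : br u y = y by apply/eqP; rewrite -mem_ad_fix.
  have /vlineP [k ek] : l *: u \in <[y]>%VS.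
    have ny : - y \in <[y]>%VS by rewrite memvN memv_line.
    have := hl u; rewrite /eigen_mod (brC y u) uy => /(memvB ny).
    by rewrite opprB addrC subrK.
  move: uy; rewrite -(scalerK l0 u) ek scalerA brZl brxx scaler0 => y0'.
  by rewrite -y0' eqxx in y0.
apply/eqP; rewrite eqEsubv -memvE uU andbT; apply/subvP => x xU.
have [b xb] := ad_fix_decomp x.
have /eqP := capU _ xb (memvD xU (memvZ b uU)).
by rewrite addr_eq0 => /eqP ->; rewrite memvN memvZ ?memv_line.
Qed.

Lemma ad_fix_br n m : n \in N -> m \in N -> exists2 c, br n m = c *: u & c + c = 0.
Proof.
rewrite !mem_ad_fix => /eqP un /eqP um.
have unm := br_weight (etrans un (esym (scale1r n))) (etrans um (esym (scale1r m))).
have /vlineP [c ec] := hu (br n m); rewrite unm scalerDl addrK scale1r in ec.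
exists c => //; move: unm; rewrite ec brZr brxx scaler0 scalerA => /esym/eqP.
by rewrite scaler_eq0 (negbTE u0) orbF mulrDl mul1r => /eqP.
Qed.

Lemma abelian_case : (forall n m, n \in N -> m \in N -> br n m = 0) -> almost_abelian br.
Proof.
move=> abN; have fixN n : n \in N -> br u n = n by rewrite mem_ad_fix => /eqP.
have L2 : brk br fullv fullv = N.
  apply/eqP; rewrite eqEsubv; apply/andP; split; last first.
    by apply/subvP => n nN; rewrite -(fixN n nN) mem_brk ?memvf.
  apply: brk_sub => x y _ _.
  have [a xa] := ad_fix_decomp x; have [b yb] := ad_fix_decomp y.
  rewrite -(addrK (a *: u) x) -(addrK (b *: u) y) !(brBl, brBr, brZl, brZr) brxx.
  rewrite abN // (brC _ u) !fixN // !scaler0 subr0 sub0r scalerN opprK.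
  by rewrite memvB ?memvZ.
by exists u; rewrite L2; split; rewrite ?ad_fix_line ?ad_fix_sum.
Qed.

Lemma nonabelian_case n m : n \in N -> m \in N -> br n m != 0 ->
  (2 \in [pchar F])%N /\ exists f : 'Hom(V, 'rV[F]_3),
    [/\ lker f = 0%VS, limg f = fullv,
        (forall x y, f (br x y) = Kbr (f x) (f y)) & (f @: U)%VS = <[Kc F]>%VS].
Proof.
move=> nN mN nm0; have [c enm cc] := ad_fix_br nN mN.
have c0 : c != 0 by apply: contraNneq nm0 => c0; rewrite enm c0 scale0r.
have char2 : (2 \in [pchar F])%N.
  rewrite inE /=; have : c * 2%:R == 0 by rewrite mulr_natr mulr2n cc.
  by rewrite mulf_eq0 (negbTE c0).
split=> //; set m' := c^-1 *: m.
have m'N : m' \in N by rewrite memvZ.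
have nm' : br n m' = u by rewrite brZr enm scalerA mulVf ?scale1r.
have fixN y : y \in N -> br y u = y.
  by rewrite mem_ad_fix => /eqP uy; rewrite brC uy -scaleN1r oppr_pchar2 ?scale1r.
have Nspan : (N <= <[n]> + <[m']>)%VS.
  apply/subvP => p pN.
  have [a ea _] := ad_fix_br m'N pN; have [b eb _] := ad_fix_br pN nN.
  have := jacobi n m' p; rewrite ea eb nm' !brZr !fixN // addrC => /eqP.
  rewrite addr_eq0 => /eqP ->; rewrite memvN.
  by apply: memv_add; rewrite memvZ ?memv_line.
have n0 : n != 0 by apply: contraNneq nm0 => ->; rewrite br0l.
have m'n : m' \notin <[n]>%VS.
  by apply/negP => /vlineP [k ek]; move: u0; rewrite -nm' ek brZr brxx scaler0 eqxx.
have bX : basis_of fullv [:: n; m'; u].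
  rewrite basisEdim !span_cons span_nil addv0 addvA -ad_fix_sum addvS //=.
  rewrite (dimv_disjoint_sum ad_fix_line) dim_vline u0 addn1 ltnS.
  by rewrite -(dim_span2 n0 m'n) dimvS // subv_add -!memvE nN.
have [f [ker0 imf fbr fu]] := K_iso bX nm' (fixN _ m'N) (fixN _ nN).
by exists f; split; rewrite // U_line limg_line fu.
Qed.

Lemma unit_scalar_classification :
  almost_abelian br \/ (2 \in [pchar F])%N /\ exists f : 'Hom(V, 'rV[F]_3),
    [/\ lker f = 0%VS, limg f = fullv,
        (forall x y, f (br x y) = Kbr (f x) (f y)) & (f @: U)%VS = <[Kc F]>%VS].
Proof.
have [[n [m [nN mN nm0]]]|abN] :=
  classic (exists n m, [/\ n \in N, m \in N & br n m != 0]).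
  by right; apply: nonabelian_case nm0.
left; apply: abelian_case => n m nN mN; apply/eqP/negPn/negP => nm0.
by apply: abN; exists n, m.
Qed.

End UnitScalar.
End Lie.

Theorem lemma3p3 (F : fieldType) (V : vectType F) (br : V -> V -> V)
    (hL : is_lie br) (U : {vspace V}) (hU : subalg br U)
    (hcf : core_free br U)
    (hyp : forall u z : V, u \in U -> u != 0 -> z \notin U ->
       \dim (gen br u z) = 2%N \/ mu_alg br (gen br u z)) :
  [\/ almost_abelian br,
      (forall u z : V, u \in U -> u != 0 -> z \notin U -> mu_alg br (gen br u z))
    | (2 \in [pchar F])%N /\
      exists f : 'Hom(V, 'rV[F]_3),
        [/\ lker f = 0%VS, limg f = fullv,
            (forall x y, f (br x y) = Kbr (f x) (f y)) &
            (f @: U)%VS = <[Kc F]>%VS]].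
Proof.
have [[u0 [z0 [u0U u00 z0U nmu]]]|allmu] := classic (exists u z,
    [/\ u \in U, u != 0, z \notin U & ~ mu_alg br (gen br u z)]); last first.
  apply: Or32 => u z uU u0 zU; apply: NNPP => nmu.
  by apply: allmu; exists u, z.
have [l0 l00 e0] :=
  uniform_eigenvalue hL hU u0U u00 (fun w => hyp u0 w u0U u00) hcf z0U nmu.
have scalarU y : y \in U -> y != 0 -> exists2 l, l != 0 & forall z, eigen_mod br y l z.
  move=> yU y0; apply: (uniform_eigenvalue hL hU yU y0 (fun w => hyp y w yU y0) hcf z0U).
  exact: (scalar_excludes_mu hL hU u0U u00 l00 e0 yU y0 z0U).
set u := l0^-1 *: u0.
have uU : u \in U by rewrite memvZ.
have u0' : u != 0 by rewrite scaler_eq0 invr_eq0 negb_or l00.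
have hu z : eigen_mod br u 1 z.
  rewrite /u -(mulVf l00); exact: (eigen_modZ hL (invr_neq0 l00) (e0 z)).
have [abel|char2K] := unit_scalar_classification hL uU u0' hu scalarU.
  exact: Or31.
exact: Or33.
Qed.
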